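(* Let $\mathcal{M}_1=\{A\in\mathbb{C}^{3\times3}\mid \deg(m_A)\le 2\}$. Then for all $A\in\mathcal{M}_1$: $c_3(A)=0$, $c_4(A)=0$, $d_2(A)^3=d_3(A)^2$, and $d_3(A)\,c_1(A)=d_2(A)\,c_2(A)$.
   Context: $m_A$ is the minimal polynomial of $A$. For $A\in\mathbb{C}^{3\times3}$: $c_1(A)=A-\frac13\mathrm{tr}(A)I_3$; $c_2(A)=c_1(c_1(A)^2)$; $d_2(A)=\frac16\mathrm{tr}(c_1(A)^2)$; $d_3(A)=\frac12\det(c_1(A))$; $c_3(A)$ is the cubic form $\underline{x}\mapsto\det(\underline{x}\,|\,A\underline{x}\,|\,A^2\underline{x})$ on $\mathbb{C}^3$ (matrix with these columns); $c_4(A)$ is the cubic form on row vectors $\underline{x}^T\mapsto\det$ of the matrix with rows $\underline{x}^T,\underline{x}^TA,\underline{x}^TA^2$. *)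

From HB Require Import structures.
From mathcomp Require Import all_boot all_order all_algebra.
From mathcomp Require Import complex.
From mathcomp Require Import reals.
Set Implicit Arguments. Unset Strict Implicit. Unset Printing Implicit Defensive.
Import Order.TTheory GRing.Theory Num.Theory.
Local Open Scope ring_scope.

Section Defs.
Variable F : fieldType.

Definition c1 (A : 'M[F]_3) : 'M[F]_3 := A - (3%:R^-1 * \tr A)%:M.
Definition c2 (A : 'M[F]_3) : 'M[F]_3 := c1 (c1 A ^+ 2).
Definition d2 (A : 'M[F]_3) : F := 6%:R^-1 * \tr (c1 A ^+ 2).
Definition d3 (A : 'M[F]_3) : F := 2%:R^-1 * \det (c1 A).
Definition c3 (A : 'M[F]_3) (x : 'cV[F]_3) : F :=
  \det (\matrix_(i < 3, j < 3) ((A ^+ j) *m x) i 0).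
Definition c4 (A : 'M[F]_3) (x : 'rV[F]_3) : F :=
  \det (\matrix_(i < 3, j < 3) (x *m (A ^+ i)) 0 j).
End Defs.

From HB Require Import structures.
From mathcomp Require Import all_boot all_order all_algebra.
From mathcomp Require Import complex.
From mathcomp Require Import reals.
From mathcomp Require Import ring.
Set Implicit Arguments. Unset Strict Implicit. Unset Printing Implicit Defensive.
Import Order.TTheory GRing.Theory Num.Theory.
Local Open Scope ring_scope.

(* A matrix whose minimal polynomial has degree at most 2 satisfies a relation
   A^2 = s A + r.  Then x, A x, A^2 x (and likewise x^T, x^T A, x^T A^2) are
   linearly dependent, so c_3 and c_4 vanish.  The traceless part B = c_1(A)
   satisfies a relation B^2 = s B + r of the same kind; then tr B^2 = 3 r, and
   Cayley-Hamilton forces det B = s r and r (2 s^2 - r) = 0.  Thus d_2 = r/2,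
   d_3 = s r/2 and c_2 = s B, from which both remaining identities follow. *)

Lemma trmxX (R : comNzRingType) (n k : nat) (A : 'M[R]_n) : (A ^+ k)^T = A^T ^+ k.
Proof.
elim: k => [|k IHk]; first by rewrite !expr0 trmx1.
by rewrite exprS -mulmxE trmx_mul IHk mulmxE -exprSr.
Qed.

Lemma mxminpoly_size_le3 (F : fieldType) (n : nat) (A : 'M[F]_n.+1) :
  (size (mxminpoly A) <= 3)%N -> exists s r : F, A ^+ 2 = s *: A + r%:M.
Proof.
set p := mxminpoly A => size_p.
have p_poly3 : p = \poly_(i < 3) p`_i.
  apply/polyP => k; rewrite coef_poly; case: ltnP => // le3k.
  by rewrite nth_default // (leq_trans size_p le3k).
have rootA := mx_root_minpoly A; rewrite -/p p_poly3 poly_def in rootA.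
rewrite rmorph_sum !big_ord_recr big_ord0 /= add0r !linearZ /= in rootA.
rewrite !rmorphXn /= horner_mx_X expr0 expr1 scalemx1 in rootA.
have lead_p : p`_(size p).-1 = 1 by have /monicP := mxminpoly_monic A.
have : size p = 2%N \/ size p = 3%N.
  have : (1 < size p)%N by rewrite size_mxminpoly ltnS mxminpoly_nonconstant.
  by move: size_p; case: (size p) => [|[|[|[|]]]]; auto.
case=> size_p_eq; rewrite size_p_eq /= in lead_p.
- have p2 : p`_2 = 0 by rewrite nth_default // size_p_eq.
  rewrite p2 lead_p scale0r addr0 scale1r in rootA.
  have hA : A = - (p`_0)%:M by apply/eqP; rewrite -addr_eq0 addrC rootA.
  exists (- p`_0), 0; rewrite raddf0 addr0 expr2 {1}hA.
  by rewrite -raddfN -mulmxE mul_scalar_mx.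
- rewrite lead_p scale1r in rootA.
  exists (- p`_1), (- p`_0); apply/eqP.
  by rewrite scaleNr raddfN -opprD -addr_eq0 addrC [_ *: A + _]addrC rootA.
Qed.

Lemma quadratic_mx_shift (R : comNzRingType) (n : nat) (A : 'M[R]_n) (s r t : R) :
  A ^+ 2 = s *: A + r%:M ->
  (A - t%:M) ^+ 2 = (s - 2%:R * t) *: (A - t%:M) + (r + s * t - t ^+ 2)%:M.
Proof.
move=> sqA; rewrite expr2 mulrBl !mulrBr -expr2 sqA -!mulmxE.
rewrite mul_mx_scalar mul_scalar_mx -scalar_mxM.
by apply/matrixP => i j; rewrite !mxE; ring.
Qed.

Lemma quadratic_trmx (R : comNzRingType) (n : nat) (A : 'M[R]_n) (s r : R) :
  A ^+ 2 = s *: A + r%:M -> A^T ^+ 2 = s *: A^T + r%:M.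
Proof. by move=> sqA; rewrite -trmxX sqA linearD linearZ /= tr_scalar_mx. Qed.

Lemma c3_trmx (F : fieldType) (A : 'M[F]_3) (x : 'cV[F]_3) : c3 A x = c4 A^T x^T.
Proof.
rewrite /c3 /c4 -det_tr; congr (\det _); apply/matrixP => i j.
by rewrite !mxE -trmxX; apply: eq_bigr => k _; rewrite !mxE mulrC.
Qed.

Lemma c4_quadratic (F : fieldType) (A : 'M[F]_3) (s r : F) :
  A ^+ 2 = s *: A + r%:M -> forall x : 'rV[F]_3, c4 A x = 0.
Proof.
move=> sqA x; apply/eqP/det0P.
exists (\row_(j < 3) [:: r; s; -1]`_j).
  apply/eqP => /rowP/(_ 2); rewrite !mxE /=; apply/eqP.
  by rewrite oppr_eq0 oner_neq0.
set M := \matrix_(i < 3, j < 3) _.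
have rowM (i : 'I_3) : row i M = x *m A ^+ i by apply/rowP => j; rewrite !mxE.
rewrite mulmx_sum_row !big_ord_recl big_ord0 !rowM !mxE /= /bump /=.
rewrite expr0 expr1 sqA mulmx1 mulmxDr -scalemxAr mul_mx_scalar.
by rewrite scaleN1r addr0 addrA [r *: x + _]addrC subrr.
Qed.

Lemma det_mx33 (R : comNzRingType) (A : 'M[R]_3) : \det A =
    A 0 0 * (A 1 1 * A 2 2 - A 1 2 * A 2 1)
  - A 0 1 * (A 1 0 * A 2 2 - A 1 2 * A 2 0)
  + A 0 2 * (A 1 0 * A 2 1 - A 1 1 * A 2 0).
Proof.
rewrite (expand_det_row _ 0) !big_ord_recl big_ord0 /cofactor.
rewrite !(expand_det_row _ 0) !big_ord_recl !big_ord0 /cofactor !det_mx11 !mxE /=.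
pose a (i j : nat) := A (inord i) (inord j).
have entry (i j : 'I_3) : A i j = a i j by rewrite /a !inord_val.
by rewrite !entry /bump /=; ring.
Qed.

Lemma cayley_hamilton_mx33 (R : comNzRingType) (A : 'M[R]_3) :
  2%:R *: A ^+ 3 =
  (2%:R * \tr A) *: A ^+ 2 - (\tr A ^+ 2 - \tr (A ^+ 2)) *: A + (2%:R * \det A)%:M.
Proof.
rewrite det_mx33 /mxtrace !exprS expr0 !mulr1 -!mulmxE.
apply/matrixP => i j; rewrite !mxE !big_ord_recl !big_ord0 !mxE /=.
rewrite !big_ord_recl !big_ord0 /=.
pose a (k l : nat) := A (inord k) (inord l).
have entry (k l : 'I_3) : A k l = a k l by rewrite /a !inord_val.
rewrite !entry /bump /=.
by case: i => [[|[|[|i]]] Hi] //; case: j => [[|[|[|j]]] Hj] //=; ring.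
Qed.

Section TracelessQuadratic.

Variables (F : numFieldType) (B : 'M[F]_3) (s r : F).
Hypotheses (trB : \tr B = 0) (sqB : B ^+ 2 = s *: B + r%:M).

Lemma mxtrace_sq_traceless : \tr (B ^+ 2) = r *+ 3.
Proof. by rewrite sqB mxtraceD mxtraceZ trB mulr0 add0r mxtrace_scalar. Qed.

Lemma det_traceless_quadratic : \det B = s * r /\ r * (2%:R * s ^+ 2 - r) = 0.
Proof.
have CH := cayley_hamilton_mx33 B.
rewrite trB mulr0 scale0r expr0n mxtrace_sq_traceless /= in CH.
have cubeB : B ^+ 3 = s *: (s *: B + r%:M) + r *: B.
  by rewrite exprSr sqB mulrDl -scalerAl -expr2 sqB -mulmxE mul_scalar_mx.
rewrite cubeB in CH.
have linB : (2%:R * s ^+ 2 - r) *: B + (2%:R * (s * r) - 2%:R * \det B)%:M = 0.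
  apply/matrixP => i j; move/matrixP: CH => /(_ i j); rewrite !mxE.
  by move/eqP; rewrite -subr_eq0 => /eqP CHij; apply: etrans CHij; ring.
have tr_lin := congr1 mxtrace linB.
rewrite !linearE /= !mxtrace_scalar trB mulr0 add0r in tr_lin.
have tr_linB := congr1 (fun M => \tr (M * B)) linB.
rewrite /= mulrDl -scalerAl -mulmxE mul_scalar_mx mulmxE -expr2 mul0r in tr_linB.
rewrite !linearE /= trB mxtrace_sq_traceless mulr0 addr0 in tr_linB.
split.
  have /eqP : 6%:R * (s * r - \det B) = 0 by rewrite -tr_lin; ring.
  have nz6 : (6%:R : F) != 0 by rewrite pnatr_eq0.
  by rewrite mulf_eq0 (negbTE nz6) subr_eq0 => /eqP.
have /eqP : 3%:R * (r * (2%:R * s ^+ 2 - r)) = 0 by rewrite -tr_linB; ring.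
have nz3 : (3%:R : F) != 0 by rewrite pnatr_eq0.
by rewrite mulf_eq0 (negbTE nz3) => /eqP.
Qed.

End TracelessQuadratic.

Lemma mxtrace_c1 (F : numFieldType) (A : 'M[F]_3) : \tr (c1 A) = 0.
Proof.
by rewrite /c1 linearB /= mxtrace_scalar -mulr_natr; field.
Qed.

Lemma d_relations_quadratic (F : numFieldType) (A : 'M[F]_3) (s r : F) :
  c1 A ^+ 2 = s *: c1 A + r%:M ->
  d2 A ^+ 3 = d3 A ^+ 2 /\ d3 A *: c1 A = d2 A *: c2 A.
Proof.
move=> sqB; have trB := mxtrace_c1 A.
have [detB degenerate] := det_traceless_quadratic trB sqB.
rewrite /d2 /d3 /c2 detB (mxtrace_sq_traceless trB sqB); split.
  apply/eqP; rewrite -subr_eq0 -(mulr0 (- (8%:R^-1 * r))) -degenerate.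
  by apply/eqP; field.
rewrite [c1 (c1 A ^+ 2)]/c1 (mxtrace_sq_traceless trB sqB) sqB.
by apply/matrixP => i j; rewrite !mxE; field.
Qed.

Theorem proposition4p4 (R : realType) (A : 'M[R[i]]_3) :
  (size (mxminpoly A) <= 3)%N ->
  (forall x : 'cV[R[i]]_3, c3 A x = 0) /\
  (forall x : 'rV[R[i]]_3, c4 A x = 0) /\
  d2 A ^+ 3 = d3 A ^+ 2 /\
  d3 A *: c1 A = d2 A *: c2 A.
Proof.
move=> /mxminpoly_size_le3 [s [r sqA]].
split; first by move=> x; rewrite c3_trmx (c4_quadratic (quadratic_trmx sqA)).
split; first exact: c4_quadratic sqA.
exact: d_relations_quadratic (quadratic_mx_shift _ sqA).
Qed.
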